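(* Let $p=p(x,y)$ be a germ at the origin of an analytic function with $p(0,0)\neq 0$, and let $C,D$ be constants different from $0$ and $1$. Let $W_C$ (resp. $W_D$) be the planar 4-web whose foliations are the kernels of $dx$, $dy$, $dy-p\,dx$, $dy-C\,p\,dx$ (resp. $dx$, $dy$, $dy-p\,dx$, $dy-D\,p\,dx$). Then there is a (linear) bijection between the space of abelian relations of $W_C$ and that of $W_D$; in particular $W_C$ and $W_D$ have the same rank. *)

(* Germs of analytic functions at the origin of K^2 are
   modelled by convergent double power series (the ring K{x,y}):
   a germ f is its coefficient array  f i j = coefficient of x^i y^j. *)
From HB Require Import structures.
From mathcomp Require Import all_boot all_order all_algebra.
Set Implicit Arguments. Unset Strict Implicit. Unset Printing Implicit Defensive.
Import Order.TTheory GRing.Theory Num.Theory.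
Local Open Scope ring_scope.

Definition ps (K : Type) := nat -> nat -> K.

Section PowerSeries.
Variable K : numFieldType.

Definition ps_add (f g : ps K) : ps K := fun i j => f i j + g i j.
Definition ps_scale (c : K) (f : ps K) : ps K := fun i j => c * f i j.
Definition ps_const (c : K) : ps K :=
  fun i j => if (i == 0%N) && (j == 0%N) then c else 0.
Definition ps_mul (f g : ps K) : ps K :=
  fun i j => \sum_(k < i.+1) \sum_(l < j.+1) f k l * g (i - k)%N (j - l)%N.
Definition ps_dx (f : ps K) : ps K := fun i j => (i.+1)%:R * f i.+1 j.
Definition ps_dy (f : ps K) : ps K := fun i j => (j.+1)%:R * f i j.+1.

(* convergence (= positive polyradius, via Cauchy estimates):
   the series defines an analytic germ at the origin *)
Definition convergent (f : ps K) : Prop :=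
  exists r : K, 0 < r /\ exists M : K, forall i j, `|f i j| * r ^+ (i + j) <= M.

(* a germ of 1-form  alpha dx + beta dy  *)
Definition form := (ps K * ps K)%type.

(* a planar 4-web, given by 4 defining 1-forms  W k = (alpha_k, beta_k) *)
Definition web4 := 'I_4 -> form.

(* Abelian relation: a 4-tuple of closed analytic 1-forms eta_k = a_k omega_k
   (each defining (a multiple of) the k-th foliation) with sum eta_k = 0. *)
Definition abelian_relation (W : web4) (a : 'I_4 -> ps K) : Prop :=
  [/\ forall k, convergent (a k),
      (* d(a_k (alpha_k dx + beta_k dy)) = 0 *)
      forall k, ps_dx (ps_mul (a k) (W k).2) = ps_dy (ps_mul (a k) (W k).1),
      forall i j, \sum_(k < 4) ps_mul (a k) (W k).1 i j = 0 &
      forall i j, \sum_(k < 4) ps_mul (a k) (W k).2 i j = 0].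

Definition web_pC (p : ps K) (C : K) : web4 :=
  fun k => match val k with
           | 0 => (ps_const 1, ps_const 0)
           | 1 => (ps_const 0, ps_const 1)
           | 2 => (ps_scale (-1) p, ps_const 1)
           | _ => (ps_scale (- C) p, ps_const 1)
           end.

Definition ps4_linear (Phi : ('I_4 -> ps K) -> ('I_4 -> ps K)) : Prop :=
  forall (c : K) (a b : 'I_4 -> ps K) k i j,
    Phi (fun k => ps_add (ps_scale c (a k)) (b k)) k i j
    = c * Phi a k i j + Phi b k i j.

End PowerSeries.

(* An abelian relation (a0, a1, a2, a3) of W_C is determined by a1 and a2:
   a3 = - a1 - a2 and a0 = (1 - C) a2 p - C a1 p.  After this substitution the
   closedness conditions read  d_x a1 = 0,  d_x a2 = - d_y (a2 p)  and
   (1 - C) d_y (a2 p) = C d_y (a1 p).  Hence rescaling (a0, a1, a2) by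
   (al, be, ga) with  be D = al C  and  ga (1 - D) = al (1 - C)  sends the
   abelian relations of W_C onto those of W_D, and the inverse scalars give the
   inverse map. *)

From mathcomp Require Import all_boot all_order all_algebra ring.
From Stdlib Require Import FunctionalExtensionality.
Import Order.TTheory GRing.Theory Num.Theory.
Local Open Scope ring_scope.
Set Implicit Arguments. Unset Strict Implicit. Unset Printing Implicit Defensive.

Section PowerSeriesAlgebra.
Variable K : numFieldType.
Implicit Types (f g h : ps K) (c : K).

Lemma ps_ext f g : (forall i j, f i j = g i j) -> f = g.
Proof.
by move=> fg; apply: functional_extensionality => i;
  apply: functional_extensionality => j.
Qed.

Lemma ps_mulDl f g h : ps_mul (ps_add f g) h = ps_add (ps_mul f h) (ps_mul g h).
Proof.
apply: ps_ext => i j; rewrite /ps_mul /ps_add -big_split; apply: eq_bigr => k _.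
by rewrite -big_split; apply: eq_bigr => l _; rewrite mulrDl.
Qed.

Lemma ps_mulZl c f h : ps_mul (ps_scale c f) h = ps_scale c (ps_mul f h).
Proof.
apply: ps_ext => i j; rewrite /ps_mul /ps_scale mulr_sumr; apply: eq_bigr => k _.
by rewrite mulr_sumr; apply: eq_bigr => l _; rewrite mulrA.
Qed.

Lemma ps_mulZr c f h : ps_mul f (ps_scale c h) = ps_scale c (ps_mul f h).
Proof.
apply: ps_ext => i j; rewrite /ps_mul /ps_scale mulr_sumr; apply: eq_bigr => k _.
by rewrite mulr_sumr; apply: eq_bigr => l _; rewrite mulrCA.
Qed.

Lemma ps_mul_const f c : ps_mul f (ps_const c) = ps_scale c f.
Proof.
apply: ps_ext => i j; rewrite /ps_mul /ps_scale /ps_const mulrC.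
have const_off m (k : 'I_m.+1) : ((m - k == 0%N) = (k == ord_max))%N.
  by rewrite subn_eq0 -val_eqE /= eqn_leq leq_ord.
rewrite (bigD1 ord_max) //= [X in _ + X]big1 => [|k nk]; last first.
  by apply: big1 => l _; rewrite const_off (negbTE nk) mulr0.
rewrite addr0 (bigD1 ord_max) //= [X in _ + X]big1 => [|l nl]; last first.
  by rewrite subnn const_off (negbTE nl) andbF mulr0.
by rewrite !subnn addr0.
Qed.

Lemma ps_dxD f g : ps_dx (ps_add f g) = ps_add (ps_dx f) (ps_dx g).
Proof. by apply: ps_ext => i j; rewrite /ps_dx /ps_add mulrDr. Qed.

Lemma ps_dxZ c f : ps_dx (ps_scale c f) = ps_scale c (ps_dx f).
Proof. by apply: ps_ext => i j; rewrite /ps_dx /ps_scale mulrCA. Qed.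

Lemma ps_dyD f g : ps_dy (ps_add f g) = ps_add (ps_dy f) (ps_dy g).
Proof. by apply: ps_ext => i j; rewrite /ps_dy /ps_add mulrDr. Qed.

Lemma ps_dyZ c f : ps_dy (ps_scale c f) = ps_scale c (ps_dy f).
Proof. by apply: ps_ext => i j; rewrite /ps_dy /ps_scale mulrCA. Qed.

End PowerSeriesAlgebra.

Section Convergence.
Variable K : numFieldType.
Implicit Types (f g : ps K) (c : K).

Lemma convergent_scale c f : convergent f -> convergent (ps_scale c f).
Proof.
move=> [r [r_gt0 [M bound]]]; exists r; split => //; exists (`|c| * M) => i j.
by rewrite /ps_scale normrM -mulrA; apply: ler_wpM2l.
Qed.

Lemma convergent_add f g : convergent f -> convergent g -> convergent (ps_add f g).
Proof.
move=> [r1 [r1_gt0 [M1 bound1]]] [r2 [r2_gt0 [M2 bound2]]].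
suff common_radius : forall r, 0 < r -> r <= r1 -> r <= r2 ->
    convergent (ps_add f g).
  have [r12|r21] := real_leP (gtr0_real r1_gt0) (gtr0_real r2_gt0).
    exact: (common_radius r1).
  by apply: (common_radius r2) => //; apply: ltW.
move=> r r_gt0 le_r1 le_r2; exists r; split => //; exists (M1 + M2) => i j.
have r_ge0 : 0 <= r ^+ (i + j) by rewrite exprn_ge0 // ltW.
apply: le_trans (ler_wpM2r r_ge0 (ler_normD _ _)) _; rewrite mulrDl.
apply: lerD.
  apply: le_trans (bound1 i j); apply: ler_wpM2l => //.
  by apply: lerXn2r => //; rewrite qualifE /= ltW.
apply: le_trans (bound2 i j); apply: ler_wpM2l => //.
by apply: lerXn2r => //; rewrite qualifE /= ltW.
Qed.

End Convergence.

Definition o0 : 'I_4 := @Ordinal 4 0 isT.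
Definition o1 : 'I_4 := @Ordinal 4 1 isT.
Definition o2 : 'I_4 := @Ordinal 4 2 isT.
Definition o3 : 'I_4 := @Ordinal 4 3 isT.

Lemma ord4_ind (P : 'I_4 -> Prop) : P o0 -> P o1 -> P o2 -> P o3 -> forall k, P k.
Proof.
by move=> P0 P1 P2 P3 [[|[|[|[|//]]]] lt_k4]; rewrite (bool_irrelevance lt_k4 isT).
Qed.

Lemma big_ord4 (R : Type) (idx : R) (op : Monoid.law idx) (F : 'I_4 -> R) :
  \big[op/idx]_(k < 4) F k = op (op (op (F o0) (F o1)) (F o2)) (F o3).
Proof.
rewrite !big_ord_recr big_ord0 /= Monoid.mul1m.
by congr (op (op (op (F _) (F _)) (F _)) (F _)); apply: val_inj.
Qed.

Section WebRelations.
Variables (K : numFieldType) (p : ps K) (C : K).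
Implicit Type a : 'I_4 -> ps K.

Record web_pC_relation a : Prop := WebRelation {
  web_rel_convergent : forall k, convergent (a k);
  web_rel_closed0 : forall i j, ps_dy (a o0) i j = 0;
  web_rel_closed1 : forall i j, ps_dx (a o1) i j = 0;
  web_rel_closed2 : forall i j, ps_dx (a o2) i j = - ps_dy (ps_mul (a o2) p) i j;
  web_rel_closed3 : forall i j,
    ps_dx (a o3) i j = - C * ps_dy (ps_mul (a o3) p) i j;
  web_rel_sum_dx : forall i j,
    a o0 i j = ps_mul (a o2) p i j + C * ps_mul (a o3) p i j;
  web_rel_sum_dy : forall i j, a o1 i j + a o2 i j + a o3 i j = 0 }.

Lemma abelian_relation_web_pC a :
  abelian_relation (web_pC p C) a <-> web_pC_relation a.
Proof.
split=> [[conv closed sum_dx sum_dy] | [conv cl0 cl1 cl2 cl3 sum_dx sum_dy]].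
  have closed_at k i j := congr1 (fun F => F i j) (closed k).
  split=> // i j.
  - move: (closed_at o0 i j); rewrite /= !ps_mul_const ps_dxZ ps_dyZ /ps_scale.
    by rewrite mul0r mul1r.
  - move: (closed_at o1 i j); rewrite /= !ps_mul_const ps_dxZ ps_dyZ /ps_scale.
    by rewrite mul0r mul1r.
  - move: (closed_at o2 i j); rewrite /= ps_mul_const ps_mulZr ps_dxZ ps_dyZ.
    by rewrite /ps_scale mul1r mulN1r.
  - move: (closed_at o3 i j); rewrite /= ps_mul_const ps_mulZr ps_dxZ ps_dyZ.
    by rewrite /ps_scale mul1r.
  - move: (sum_dx i j); rewrite big_ord4 /= !ps_mul_const !ps_mulZr /ps_scale.
    by move=> sum0; rewrite -[LHS]subr0 -sum0; ring.
  - move: (sum_dy i j); rewrite big_ord4 /= !ps_mul_const /ps_scale => sum0.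
    by rewrite -[RHS]sum0; ring.
split=> //.
- apply: ord4_ind; rewrite /= !ps_mul_const ?ps_mulZr ps_dxZ ps_dyZ;
    apply: ps_ext => i j; rewrite /ps_scale.
  + by rewrite cl0; ring.
  + by rewrite cl1; ring.
  + by rewrite cl2; ring.
  + by rewrite cl3; ring.
- move=> i j; rewrite big_ord4 /= !ps_mul_const !ps_mulZr /ps_scale sum_dx; ring.
- move=> i j; rewrite big_ord4 /= !ps_mul_const /ps_scale -[RHS](sum_dy i j); ring.
Qed.

Variable a : 'I_4 -> ps K.
Hypothesis rel_a : web_pC_relation a.

Lemma web_rel_last : a o3 = ps_scale (-1) (ps_add (a o1) (a o2)).
Proof.
apply: ps_ext => i j; rewrite /ps_scale /ps_add.
by rewrite -[LHS]subr0 -(web_rel_sum_dy rel_a i j); ring.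
Qed.

Lemma web_rel_dy_balance i j :
  (1 - C) * ps_dy (ps_mul (a o2) p) i j = C * ps_dy (ps_mul (a o1) p) i j.
Proof.
have := web_rel_closed3 rel_a i j.
rewrite web_rel_last ps_dxZ ps_dxD ps_mulZl ps_mulDl ps_dyZ ps_dyD /ps_scale /ps_add.
rewrite (web_rel_closed1 rel_a) (web_rel_closed2 rel_a) => closed3.
set Y1 := ps_dy (ps_mul (a o1) p) i j in closed3 *.
set Y2 := ps_dy (ps_mul (a o2) p) i j in closed3 *.
transitivity (- 1 * (0 + - Y2) - C * Y2); first by ring.
by rewrite closed3; ring.
Qed.

End WebRelations.

Section Transfer.
Variable K : numFieldType.
Implicit Types (p : ps K) (a : 'I_4 -> ps K).

Definition web_transfer (al be ga : K) a : 'I_4 -> ps K :=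
  fun k => match val k with
           | 0 => ps_scale al (a o0)
           | 1 => ps_scale be (a o1)
           | 2 => ps_scale ga (a o2)
           (* forced by a3 = - a1 - a2 *)
           | _ => ps_add (ps_scale (- be) (a o1)) (ps_scale (- ga) (a o2))
           end.

Lemma web_transfer_linear al be ga : ps4_linear (web_transfer al be ga).
Proof.
move=> c a b; apply: ord4_ind => i j; rewrite /web_transfer /= /ps_add /ps_scale.
all: ring.
Qed.

Lemma web_transfer_relation p (C D al be ga : K) a :
    be * D = al * C -> ga * (1 - D) = al * (1 - C) ->
  web_pC_relation p C a -> web_pC_relation p D (web_transfer al be ga a).
Proof.
move=> scale1 scale2 rel_a.
have [conv cl0 cl1 cl2 _ sum_dx _] := rel_a.
split=> [|i j|i j|i j|i j|i j|i j]; rewrite /web_transfer /=.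
- apply: ord4_ind => /=;
    by do ?[apply: convergent_add | apply: convergent_scale]; apply: conv.
- by rewrite ps_dyZ /ps_scale cl0 mulr0.
- by rewrite ps_dxZ /ps_scale cl1 mulr0.
- by rewrite ps_dxZ ps_mulZl ps_dyZ /ps_scale cl2 mulrN.
- rewrite ps_dxD !ps_dxZ ps_mulDl !ps_mulZl ps_dyD !ps_dyZ /ps_add /ps_scale cl1 cl2.
  set Y1 := ps_dy (ps_mul (a o1) p) i j; set Y2 := ps_dy (ps_mul (a o2) p) i j.
  transitivity (ga * (1 - D) * Y2 + D * ga * Y2); first by ring.
  by rewrite scale2 -mulrA web_rel_dy_balance // mulrA -scale1 -/Y1; ring.
- rewrite !ps_mulZl ps_mulDl !ps_mulZl /ps_add /ps_scale sum_dx.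
  rewrite (web_rel_last rel_a) ps_mulZl ps_mulDl /ps_scale /ps_add.
  set P1 := ps_mul (a o1) p i j; set P2 := ps_mul (a o2) p i j.
  transitivity (al * (1 - C) * P2 - al * C * P1); first by ring.
  by rewrite -scale1 -scale2; ring.
- rewrite /ps_add /ps_scale; ring.
Qed.

Lemma web_transfer_inverse p C (al be ga al' be' ga' : K) a :
    al' * al = 1 -> be' * be = 1 -> ga' * ga = 1 -> web_pC_relation p C a ->
  forall k i j, web_transfer al' be' ga' (web_transfer al be ga a) k i j = a k i j.
Proof.
move=> inv_al inv_be inv_ga rel_a; apply: ord4_ind => i j;
  rewrite /web_transfer /= /ps_add /ps_scale ?mulrA ?inv_al ?inv_be ?inv_ga ?mul1r //.
rewrite (web_rel_last rel_a) /ps_scale /ps_add.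
transitivity (- (be' * be) * a o1 i j - (ga' * ga) * a o2 i j); first by ring.
by rewrite inv_be inv_ga; ring.
Qed.

End Transfer.

Theorem mainTheorem2 (K : numFieldType) (p : ps K) (C D : K) :
  convergent p -> p 0%N 0%N != 0 ->
  C != 0 -> C != 1 -> D != 0 -> D != 1 ->
  exists Phi Psi : ('I_4 -> ps K) -> ('I_4 -> ps K),
    ps4_linear Phi /\ ps4_linear Psi /\
        (forall a, abelian_relation (web_pC p C) a ->
                  abelian_relation (web_pC p D) (Phi a)) /\
        (forall b, abelian_relation (web_pC p D) b ->
                  abelian_relation (web_pC p C) (Psi b)) /\
        (forall a, abelian_relation (web_pC p C) a ->
                  forall k i j, Psi (Phi a) k i j = a k i j) /\
        (forall b, abelian_relation (web_pC p D) b ->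
                  forall k i j, Phi (Psi b) k i j = b k i j).
Proof.
move=> _ _ C_neq0 C_neq1 D_neq0 D_neq1.
have C'_neq0 : 1 - C != 0 by rewrite subr_eq0 eq_sym.
have D'_neq0 : 1 - D != 0 by rewrite subr_eq0 eq_sym.
pose ga := D * (1 - C) / (1 - D).
have ga_neq0 : ga != 0 by rewrite !mulf_neq0 ?invr_eq0.
exists (web_transfer D C ga), (web_transfer D^-1 C^-1 ga^-1).
split; first exact: web_transfer_linear.
split; first exact: web_transfer_linear.
split=> [a /abelian_relation_web_pC rel_a|].
  apply/abelian_relation_web_pC; apply: web_transfer_relation rel_a.
    exact: mulrC.
  by rewrite /ga; field.
split=> [b /abelian_relation_web_pC rel_b|].
  apply/abelian_relation_web_pC; apply: web_transfer_relation rel_b.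
    by rewrite !mulVf.
  by rewrite /ga; field; rewrite D_neq0 D'_neq0 C'_neq0.
split=> [a /abelian_relation_web_pC rel_a|b /abelian_relation_web_pC rel_b].
  by apply: (web_transfer_inverse _ _ _ rel_a); rewrite mulVf.
by apply: (web_transfer_inverse _ _ _ rel_b); rewrite mulfV ?invr_eq0.
Qed.
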